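(* Let $F_1,\dots,F_n:\mathbb{R}^d\to\mathbb{R}^d$ with each $F_i$ $L_i$-Lipschitz, $F=\frac1n\sum_iF_i$, $L_{max}=\max_iL_i$. If the extrapolation step size of SEG-RR satisfies $\gamma_2\le\frac1{L_{max}}$, then for every epoch $k$, $$\mathbb{E}_k\Big[\sum_{i=0}^{n-1}\|F_{\pi_i^k}(\bar z_i^k)-F_{\pi_i^k}(\hat z_0^k)\|^2\Big]\le6L_{max}^2\,\mathbb{E}_k\Big[\sum_{i=0}^{n-1}\|z_i^k-z_0^k\|^2\Big]+3L_{max}^2\gamma_2^2\,\mathbb{E}_k\Big[\sum_{i=0}^{n-1}\|F_{\pi_i^k}(z_0^k)-F(z_0^k)\|^2\Big],$$ where $\hat z_0^k=z_0^k-\gamma_2F(z_0^k)$.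
   Context: SEG-RR with step sizes $\gamma_1,\gamma_2>0$: for each epoch $k$, with current point $z_0^k$, draw a permutation $\pi^k=(\pi^k_0,\dots,\pi^k_{n-1})$ of $\{1,\dots,n\}$ uniformly at random, independently of the past; for $i=0,\dots,n-1$ set $\bar z_i^k=z_i^k-\gamma_2F_{\pi_i^k}(z_i^k)$, $z_{i+1}^k=z_i^k-\gamma_1F_{\pi_i^k}(\bar z_i^k)$; then $z_0^{k+1}=z_n^k$. $\mathbb{E}_k$ denotes expectation over $\pi^k$ conditional on the history up to $z_0^k$. *)

From HB Require Import structures.
From mathcomp Require Import all_boot all_order all_algebra all_fingroup.
From mathcomp Require Import reals.
Set Implicit Arguments. Unset Strict Implicit. Unset Printing Implicit Defensive.
Import Order.TTheory GRing.Theory Num.Theory.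
Local Open Scope ring_scope.

Section SEGRR.
Variables (R : realType) (d n : nat).
Notation V := 'rV[R]_d.

Definition sqnorm (v : V) : R := \sum_(j < d) (v 0 j) ^+ 2.
Definition enorm (v : V) : R := Num.sqrt (sqnorm v).

Definition lipschitz (G : V -> V) (L : R) : Prop :=
  forall x y, enorm (G x - G y) <= L * enorm (x - y).

Definition Favg (F : 'I_n -> V -> V) (z : V) : V := n%:R^-1 *: \sum_(i < n) F i z.

Definition Lmax (L : 'I_n -> R) : R := \big[Num.max/0]_(i < n) L i.

(* SEG-RR epoch with permutation s, starting at z0:
   seg_iterates = [:: z_1; ...; z_n], z_i = nth z0 (z0 :: seg_iterates) i *)
Definition seg_iterates (F : 'I_n -> V -> V) (g1 g2 : R) (s : {perm 'I_n}) (z0 : V)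
  : seq V :=
  scanl (fun z j => z - g1 *: F j (z - g2 *: F j z)) z0 [seq s i | i <- enum 'I_n].

Definition seg_z (F : 'I_n -> V -> V) (g1 g2 : R) (s : {perm 'I_n}) (z0 : V)
  (i : nat) : V := nth z0 (z0 :: seg_iterates F g1 g2 s z0) i.

Definition seg_zbar (F : 'I_n -> V -> V) (g1 g2 : R) (s : {perm 'I_n}) (z0 : V)
  (i : 'I_n) : V :=
  seg_z F g1 g2 s z0 i - g2 *: F (s i) (seg_z F g1 g2 s z0 i).

(* expectation over a uniformly random permutation of {0,...,n-1}
   (conditional on the history up to z_0^k, which is fixed) *)
Definition Eperm (X : {perm 'I_n} -> R) : R :=
  (\sum_(s : {perm 'I_n}) X s) / #|{: {perm 'I_n}}|%:R.

End SEGRR.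

(* The estimate holds for every permutation and every index separately, so taking
   expectations only uses that [Eperm] is linear and monotone. Pointwise, the two
   points at which [F_(pi_i)] is evaluated differ by
   [(z_i - z_0) - g2 (F_(pi_i) z_i - F_(pi_i) z_0) - g2 (F_(pi_i) z_0 - F z_0)];
   Lipschitz continuity and [|a + b + c|^2 <= 3 (|a|^2 + |b|^2 + |c|^2)] reduce the
   claim to bounding the middle term, which [g2 L <= 1] controls by [|z_i - z_0|^2]. *)
From HB Require Import structures.
From mathcomp Require Import all_boot all_order all_algebra all_fingroup.
From mathcomp Require Import reals.
From mathcomp Require Import ring lra.
Set Implicit Arguments. Unset Strict Implicit. Unset Printing Implicit Defensive.
Import Order.TTheory GRing.Theory Num.Theory.
Local Open Scope ring_scope.

Section SquaredNorm.
Variables (R : realType) (d : nat).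
Implicit Types (u v w : 'rV[R]_d) (G : 'rV[R]_d -> 'rV[R]_d).

Lemma sqnorm_ge0 v : 0 <= sqnorm v.
Proof. by apply: sumr_ge0 => j _; rewrite sqr_ge0. Qed.

Lemma sqnormZ (k : R) v : sqnorm (k *: v) = k ^+ 2 * sqnorm v.
Proof. by rewrite /sqnorm mulr_sumr; apply: eq_bigr => j _; rewrite mxE exprMn. Qed.

Lemma sqnormD3_le u v w :
  sqnorm (u + v + w) <= 3 * (sqnorm u + sqnorm v + sqnorm w).
Proof.
rewrite /sqnorm -!big_split /= mulr_sumr; apply: ler_sum => j _.
rewrite !mxE; set x := u 0 j; set y := v 0 j; set z := w 0 j.
have := sqr_ge0 (x - y); have := sqr_ge0 (y - z); have := sqr_ge0 (x - z).
rewrite !expr2; nra.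
Qed.

Lemma lipschitz_sqnorm {G} {L : R} u v :
  0 <= L -> lipschitz G L -> sqnorm (G u - G v) <= L ^+ 2 * sqnorm (u - v).
Proof.
move=> L0 /(_ u v); rewrite /enorm => lipGuv.
rewrite -(sqr_sqrtr (sqnorm_ge0 (G u - G v))) -(sqr_sqrtr (sqnorm_ge0 (u - v))).
rewrite -exprMn lerXn2r ?nnegrE ?sqrtr_ge0 ?mulr_ge0 ?sqrtr_ge0 //.
Qed.

Lemma extrapolation_sqnorm_le G (L M g : R) u v w :
    0 <= L -> L <= M -> 0 <= g -> g * L <= 1 -> lipschitz G L ->
  sqnorm (G (u - g *: G u) - G (v - g *: w)) <=
  6 * M ^+ 2 * sqnorm (u - v) + 3 * M ^+ 2 * g ^+ 2 * sqnorm (G v - w).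
Proof.
move=> L0 LM g0 gL1 lipG.
set A := sqnorm (u - v); set B := sqnorm (G u - G v); set C := sqnorm (G v - w).
have A0 : 0 <= A := sqnorm_ge0 _.
have B0 : 0 <= B := sqnorm_ge0 _.
have C0 : 0 <= C := sqnorm_ge0 _.
have decomp : u - g *: G u - (v - g *: w) =
    (u - v) + (- g) *: (G u - G v) + (- g) *: (G v - w).
  apply/rowP => j; rewrite !mxE; ring.
have gB_le_A : g ^+ 2 * B <= A.
  have gL2 : (g * L) ^+ 2 <= 1 by rewrite expr_le1 // mulr_ge0.
  apply: le_trans (ler_wpM2l (sqr_ge0 g) (lipschitz_sqnorm u v L0 lipG)) _.
  by rewrite mulrA -exprMn ler_piMl.
have LM2 : L ^+ 2 <= M ^+ 2 by rewrite lerXn2r // nnegrE (le_trans L0).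
apply: le_trans (lipschitz_sqnorm _ _ L0 lipG) _.
rewrite decomp; apply: le_trans (ler_wpM2l (sqr_ge0 L) (sqnormD3_le _ _ _)) _.
rewrite !sqnormZ !sqrrN -/A -/B -/C.
have g2C0 : 0 <= g ^+ 2 * C by rewrite mulr_ge0 ?sqr_ge0.
have L20 : 0 <= L ^+ 2 by rewrite sqr_ge0.
nra.
Qed.

End SquaredNorm.

Section UniformPermutation.
Variables (R : realType) (n : nat).
Implicit Types X Y : {perm 'I_n} -> R.

Lemma EpermD X Y : Eperm (fun s => X s + Y s) = Eperm X + Eperm Y.
Proof. by rewrite /Eperm big_split mulrDl. Qed.

Lemma EpermZ (k : R) X : Eperm (fun s => k * X s) = k * Eperm X.
Proof. by rewrite /Eperm -mulr_sumr mulrA. Qed.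

Lemma ler_Eperm X Y : (forall s, X s <= Y s) -> Eperm X <= Eperm Y.
Proof.
move=> XY; rewrite /Eperm ler_wpM2r ?invr_ge0 ?ler0n //.
by apply: ler_sum => s _; apply: XY.
Qed.

End UniformPermutation.

Lemma le_Lmax (R : realType) (n : nat) (L : 'I_n -> R) i : L i <= Lmax L.
Proof. exact: le_bigmax. Qed.

Theorem lemma3 (R : realType) (d n : nat)
  (F : 'I_n -> 'rV[R]_d -> 'rV[R]_d) (L : 'I_n -> R)
  (hL0 : forall i, 0 <= L i) (hLip : forall i, lipschitz (F i) (L i))
  (g1 g2 : R) (hg1 : 0 < g1) (hg2 : 0 < g2)
  (hg2L : g2 * Lmax L <= 1)
  (z0 : 'rV[R]_d) :
  let Lm := Lmax L in
  let zhat := z0 - g2 *: Favg F z0 in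
  Eperm (fun s => \sum_(i < n)
           sqnorm (F (s i) (seg_zbar F g1 g2 s z0 i) - F (s i) zhat))
  <= 6 * Lm ^+ 2 * Eperm (fun s => \sum_(i < n) sqnorm (seg_z F g1 g2 s z0 i - z0))
   + 3 * Lm ^+ 2 * g2 ^+ 2 *
       Eperm (fun s => \sum_(i < n) sqnorm (F (s i) z0 - Favg F z0)).
Proof.
rewrite /= -!EpermZ -EpermD; apply: ler_Eperm => s.
rewrite !mulr_sumr -big_split /=; apply: ler_sum => i _.
have g2L : g2 * L (s i) <= 1.
  exact: le_trans (ler_wpM2l (ltW hg2) (le_Lmax _ _)) hg2L.
exact: extrapolation_sqnorm_le (hL0 _) (le_Lmax _ _) (ltW hg2) g2L (hLip _).
Qed.
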